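(* Let $\delta>0$ be an ordinal and $\mathcal I_{\omega^\delta}=\{I\subset\omega^\delta:\omega^\delta\not\hookrightarrow I\}$. Then $\mathcal I_{\omega^\delta}$ is an ideal of $P(\omega^\delta)$ and (a) $\mathbb P(\omega^\delta)=\langle \mathcal I_{\omega^\delta}^+,\subset\rangle$, $\mathrm{sm}(\mathbb P(\omega^\delta))=\langle\mathcal I_{\omega^\delta}^+,\subset_{\mathcal I_{\omega^\delta}}\rangle$ and $\mathrm{sq}(\mathbb P(\omega^\delta))=(P(\omega^\delta)/\mathcal I_{\omega^\delta})^+$; (b) if $\delta\ge\omega$, then $|\mathrm{sq}(\mathbb P(\omega^\delta))|\le 2^{|\delta|}$.
   Context: $\mathbb P(X)$ is the set of subsets of the ordinal $X$ order-isomorphic to $X$, ordered by inclusion. $L\hookrightarrow A$ means $L$ order-embeds into $A$. For an ideal $\mathcal I$ on a set $X$, $\mathcal I^+=P(X)\setminus\mathcal I$, and $A\subset_{\mathcal I}B$ iff $A\setminus B\in\mathcal I$; $(P(X)/\mathcal I)^+$ is the set of nonzero elements of the quotient Boolean algebra. $\mathrm{sm}$ and $\mathrm{sq}$ denote separative modification and separative quotient of a preorder ($p\le^*q$ iff every $r\le p$ has some $s\le r$ with $s\le q$; $\mathrm{sq}$ is the antisymmetric quotient of $\le^*$). *)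

(* ordinals are represented by well-ordered types. *)
From Stdlib Require Import List Arith.

Definition is_well_order {D : Type} (lt : D -> D -> Prop) : Prop :=
  (forall x, ~ lt x x) /\
  (forall x y z, lt x y -> lt y z -> lt x z) /\
  (forall x y, lt x y \/ x = y \/ lt y x) /\
  well_founded lt.

(* omega^delta, realised (Cantor normal form) as the finitely supported
   functions delta -> omega, ordered anti-lexicographically: f < g iff
   at the largest index where they differ, f is smaller. *)
Definition finsupp {D : Type} (f : D -> nat) : Prop :=
  exists l : list D, forall d, f d <> 0 -> In d l.

Definition omega_pow (D : Type) : Type := { f : D -> nat | finsupp f }.

Definition opow_lt {D : Type} (lt : D -> D -> Prop) (f g : omega_pow D) : Prop :=
  exists d, proj1_sig f d < proj1_sig g d /\
            (forall e, lt d e -> proj1_sig f e = proj1_sig g e).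

Definition subset {X : Type} (A B : X -> Prop) : Prop := forall x, A x -> B x.
Definition setminus {X : Type} (A B : X -> Prop) : X -> Prop := fun x => A x /\ ~ B x.
Definition setunion {X : Type} (A B : X -> Prop) : X -> Prop := fun x => A x \/ B x.

Definition embeds_into {X : Type} (lt : X -> X -> Prop) (A : X -> Prop) : Prop :=
  exists h : X -> X, (forall x, A (h x)) /\ (forall x y, lt x y <-> lt (h x) (h y)).

Definition iso_to_whole {X : Type} (lt : X -> X -> Prop) (A : X -> Prop) : Prop :=
  exists h : X -> X, (forall x, A (h x)) /\ (forall y, A y -> exists x, h x = y) /\
                     (forall x y, lt x y <-> lt (h x) (h y)).

(* P(X) : the carrier of the poset of copies of X, ordered by inclusion. *)
Definition PP {X : Type} (lt : X -> X -> Prop) : (X -> Prop) -> Prop := iso_to_whole lt.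

Definition I_X {X : Type} (lt : X -> X -> Prop) : (X -> Prop) -> Prop :=
  fun I => ~ embeds_into lt I.

Definition is_ideal {X : Type} (I : (X -> Prop) -> Prop) : Prop :=
  I (fun _ => False) /\
  (forall A B, subset A B -> I B -> I A) /\
  (forall A B, I A -> I B -> I (setunion A B)) /\
  ~ I (fun _ => True).

Definition sep_le {T : Type} (P : T -> Prop) (le : T -> T -> Prop) (p q : T) : Prop :=
  forall r, P r -> le r p -> exists s, P s /\ le s r /\ le s q.

Definition sq_car {T : Type} (P : T -> Prop) (le : T -> T -> Prop) : Type :=
  { C : T -> Prop | exists p, P p /\
      forall q, C q <-> (P q /\ sep_le P le p q /\ sep_le P le q p) }.

Definition sq_le {T : Type} (P : T -> Prop) (le : T -> T -> Prop)
  (a b : sq_car P le) : Prop :=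
  exists p q, proj1_sig a p /\ proj1_sig b q /\ sep_le P le p q.

(* (P(X)/I)^+ : nonzero elements of the quotient Boolean algebra,
   i.e. classes [A] (A notin I) modulo A ~ B iff A\B, B\A in I. *)
Definition bq_pos {X : Type} (I : (X -> Prop) -> Prop) : Type :=
  { C : (X -> Prop) -> Prop | exists A, ~ I A /\
      forall B, C B <-> (I (setminus A B) /\ I (setminus B A)) }.

Definition bq_le {X : Type} (I : (X -> Prop) -> Prop) (a b : bq_pos I) : Prop :=
  exists A B, proj1_sig a A /\ proj1_sig b B /\ I (setminus A B).

(* The heart of (a) is that omega^delta is indecomposable: under any 2-colouring some copy
   of omega^delta is monochromatic.  This goes by induction on delta: omega^(c+1) is a stack
   of omega blocks omega^c, of which infinitely many carry a homogeneous copy of one colour,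
   and below a limit one uses cofinally many blocks of one colour.  Hence the sets into which
   omega^delta does not embed form an ideal.  A set into which omega^delta embeds is itself
   a copy, because its collapse onto an initial segment of omega^delta cannot stop short;
   so the copies are the positive sets, [A <=* B] holds iff [A \ B] is small, and the
   separative classes are exactly the positive classes of P(omega^delta)/I.
   For (b), delta is infinite, so |delta x delta| = |delta| (Hessenberg, via Goedel's
   ordering of pairs); hence omega^delta, its finite-support functions, injects into delta,
   and a class is determined by one subset of omega^delta. *)

From Stdlib Require Import List Arith Lia Classical ClassicalEpsilon ProofIrrelevance
  FunctionalExtensionality PropExtensionality FinFun Wellfounded Relation_Operators.

Definition le_of {T : Type} (lt : T -> T -> Prop) (x y : T) : Prop := x = y \/ lt x y.

Lemma wf_min {T : Type} {R : T -> T -> Prop} : well_founded R ->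
  forall P : T -> Prop, (exists x, P x) -> exists x, P x /\ forall y, P y -> ~ R y x.
Proof.
  intros wf P [x Px]. revert Px. induction (wf x) as [x _ IH]. intros Px.
  destruct (classic (exists y, P y /\ R y x)) as [[y [Py Ryx]]|N].
  - exact (IH y Ryx Py).
  - exists x. split; [exact Px|]. intros y Py Ryx. apply N. eauto.
Qed.

Lemma wf_asym {T : Type} {R : T -> T -> Prop} : well_founded R -> forall x y, R x y -> ~ R y x.
Proof.
  intros wf x. induction (wf x) as [x _ IH]. intros y Rxy Ryx. exact (IH y Ryx x Ryx Rxy).
Qed.

Lemma wf_irrefl {T : Type} {R : T -> T -> Prop} : well_founded R -> forall x, ~ R x x.
Proof. intros wf x H. exact (wf_asym wf x x H H). Qed.

Section Increasing.
Context {T U : Type} {R : T -> T -> Prop} {Q : U -> U -> Prop} (A : T -> Prop) (c : T -> U).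
Hypothesis Q_wf : well_founded Q.
Hypothesis R_total : forall a b, A a -> A b -> R a b \/ a = b \/ R b a.
Hypothesis c_incr : forall a b, A a -> A b -> R a b -> Q (c a) (c b).

Lemma increasing_injective a b : A a -> A b -> c a = c b -> a = b.
Proof.
  intros Ha Hb E. destruct (R_total a b Ha Hb) as [L|[E'|L]]; [|exact E'|];
    apply c_incr in L; auto; rewrite E in L; destruct (wf_irrefl Q_wf _ L).
Qed.

Lemma increasing_reflects a b : A a -> A b -> Q (c a) (c b) -> R a b.
Proof.
  intros Ha Hb L. destruct (R_total a b Ha Hb) as [L'|[E|L']]; [exact L'| |]; exfalso.
  - subst b. exact (wf_irrefl Q_wf _ L).
  - exact (wf_asym Q_wf _ _ L (c_incr b a Hb Ha L')).
Qed.

End Increasing.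

Section WellOrder.
Context {T : Type} {lt : T -> T -> Prop} (wo : is_well_order lt).

Lemma wo_irrefl x : ~ lt x x. Proof. apply wo. Qed.
Lemma wo_trans x y z : lt x y -> lt y z -> lt x z. Proof. apply wo. Qed.
Lemma wo_total x y : lt x y \/ x = y \/ lt y x. Proof. apply wo. Qed.
Lemma wo_wf : well_founded lt. Proof. apply wo. Qed.

Lemma wo_le_or_gt x y : le_of lt x y \/ lt y x.
Proof. unfold le_of. destruct (wo_total x y) as [H|[H|H]]; auto. Qed.

Lemma wo_not_lt x y : ~ lt x y -> le_of lt y x.
Proof. intros H. destruct (wo_le_or_gt y x) as [L|L]; [exact L|contradiction]. Qed.

Lemma wo_le_lt_trans x y z : le_of lt x y -> lt y z -> lt x z.
Proof. intros [->|L] L'; [exact L'|exact (wo_trans _ _ _ L L')]. Qed.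

Lemma wo_lt_le_trans x y z : lt x y -> le_of lt y z -> lt x z.
Proof. intros L [<-|L']; [exact L|exact (wo_trans _ _ _ L L')]. Qed.

Lemma wo_le_trans x y z : le_of lt x y -> le_of lt y z -> le_of lt x z.
Proof. intros [->|L] H; [exact H|right; exact (wo_lt_le_trans _ _ _ L H)]. Qed.

Lemma wo_finite_max (l : list T) (P : T -> Prop) :
  (forall x, P x -> In x l) -> (exists x, P x) -> exists m, P m /\ forall x, P x -> le_of lt x m.
Proof.
  revert P. induction l as [|a l IH]; intros P Pl [x Px]; [destruct (Pl x Px)|].
  destruct (classic (exists y, P y /\ y <> a)) as [Hy|Hy].
  - destruct (IH (fun y => P y /\ y <> a)) as [m [[Pm _] Hm]]; [|exact Hy|].
    { intros y [Py Hya]. destruct (Pl y Py); [congruence|assumption]. }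
    assert (Hm' : forall y, P y -> y <> a -> le_of lt y m) by (intros y Py Hya; exact (Hm y (conj Py Hya))).
    destruct (classic (P a /\ lt m a)) as [[Pa L]|N].
    + exists a. split; [exact Pa|]. intros y Py. destruct (classic (y = a)) as [->|Hya]; [left; reflexivity|].
      right. exact (wo_le_lt_trans _ _ _ (Hm' y Py Hya) L).
    + exists m. split; [exact Pm|]. intros y Py. destruct (classic (y = a)) as [->|Hya]; [|exact (Hm' y Py Hya)].
      apply wo_not_lt. intros L. exact (N (conj Py L)).
  - exists a. assert (Pa : P a) by (destruct (classic (x = a)) as [<-|Hxa]; [exact Px|exfalso; eauto]).
    split; [exact Pa|]. intros y Py. left. apply NNPP. intros Hya. eauto.
Qed.

Lemma wo_increasing_inflationary (h : T -> T) :
  (forall x y, lt x y -> lt (h x) (h y)) -> forall x, ~ lt (h x) x.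
Proof.
  intros Hh x Hx.
  destruct (wf_min wo_wf (fun x => lt (h x) x) (ex_intro _ x Hx)) as [y [Hy Hmin]].
  exact (Hmin (h y) (Hh _ _ Hy) Hy).
Qed.

Lemma wo_chain_injective (e : nat -> T) : (forall n, lt (e n) (e (S n))) -> Injective e.
Proof.
  intros He.
  assert (Mono : forall n m, n < m -> lt (e n) (e m)).
  { intros n m Hnm. induction Hnm as [|m _ IH]; [apply He|exact (wo_trans _ _ _ IH (He m))]. }
  intros n m E. destruct (Nat.lt_trichotomy n m) as [L|[L|L]]; [|exact L|];
    apply Mono in L; rewrite E in L; destruct (wo_irrefl _ L).
Qed.

Lemma wo_cofinal_colour (P : T -> Prop) (K : T -> bool) :
  exists k, forall b, P b -> exists c, P c /\ le_of lt b c /\ K c = k.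
Proof.
  destruct (classic (forall b, P b -> exists c, P c /\ le_of lt b c /\ K c = true)) as [H|H]; [eauto|].
  apply not_all_ex_not in H. destruct H as [b0 Hb0]. exists false. intros b Pb.
  assert (Pb0 : P b0) by (apply NNPP; intros N; apply Hb0; intros P0; contradiction).
  destruct (wo_le_or_gt b b0) as [L|L].
  - exists b0. split; [exact Pb0|split; [exact L|]].
    destruct (K b0) eqn:E; [|reflexivity]. exfalso. apply Hb0. intros _. exists b0. split; [exact Pb0|split; [left|]]; auto.
  - exists b. split; [exact Pb|split; [left; reflexivity|]].
    destruct (K b) eqn:E; [|reflexivity]. exfalso. apply Hb0. intros _. exists b. split; [exact Pb|split; [right|]]; auto.
Qed.

End WellOrder.

Section Comparison.
Context {T U : Type} (R : T -> T -> Prop) (Q : U -> U -> Prop) (PT : T -> Prop) (PU : U -> Prop).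
Hypothesis R_wf : well_founded R.
Hypothesis R_trans : forall a b c, R a b -> R b c -> R a c.
Hypothesis R_total : forall a b, PT a -> PT b -> R a b \/ a = b \/ R b a.
Hypothesis Q_wf : well_founded Q.
Hypothesis Q_total : forall a b, PU a -> PU b -> Q a b \/ a = b \/ Q b a.
Hypothesis U_inh : inhabited U.

Definition Q_least (S : U -> Prop) : U := epsilon U_inh (fun u => S u /\ forall v, S v -> ~ Q v u).

Lemma Q_least_spec (S : U -> Prop) :
  (exists u, S u) -> S (Q_least S) /\ forall v, S v -> ~ Q v (Q_least S).
Proof. intros H. exact (epsilon_spec U_inh (fun u => _) (wf_min Q_wf S H)). Qed.

Definition collapse : T -> U :=
  Fix R_wf (fun _ => U)
    (fun t rec => Q_least (fun u => PU u /\ forall t' (H : R t' t), PT t' -> Q (rec t' H) u)).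

Definition collapse_bound (t : T) (u : U) : Prop :=
  PU u /\ forall t', R t' t -> PT t' -> Q (collapse t') u.

Lemma collapse_eq t : collapse t = Q_least (collapse_bound t).
Proof.
  unfold collapse at 1. rewrite Fix_eq; [reflexivity|].
  intros x f g Hfg. f_equal. apply functional_extensionality. intros u.
  apply propositional_extensionality. split; intros [Hu H]; split; auto; intros t' H'.
  - rewrite <- Hfg. apply H.
  - rewrite Hfg. apply H.
Qed.

(* [collapse] is meaningful at [t] as long as no earlier value has exhausted [PU]. *)
Definition collapse_defined (t : T) : Prop :=
  PT t /\ forall t', PT t' -> le_of R t' t -> exists u, collapse_bound t' u.

Lemma collapse_least t :
  collapse_defined t -> collapse_bound t (collapse t) /\ forall u, collapse_bound t u -> ~ Q u (collapse t).
Proof. intros [Ht H]. rewrite collapse_eq. apply Q_least_spec. apply H; [exact Ht|left; reflexivity]. Qed.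

Lemma collapse_in t : collapse_defined t -> PU (collapse t).
Proof. intros H. apply (collapse_least t H). Qed.

Lemma collapse_increasing t t' : collapse_defined t -> PT t' -> R t' t -> Q (collapse t') (collapse t).
Proof. intros H Ht' L. apply (collapse_least t H); assumption. Qed.

Lemma collapse_defined_down t t' : collapse_defined t -> PT t' -> R t' t -> collapse_defined t'.
Proof.
  intros [Ht H] Ht' L. split; [exact Ht'|]. intros s Hs Hst'. apply H; [exact Hs|].
  right. destruct Hst' as [->|L']; [exact L|exact (R_trans _ _ _ L' L)].
Qed.

(* The least [t'] whose value is not below [u] is sent to [u]. *)
Lemma collapse_hits t u : (forall s, PT s -> R s t -> collapse_defined s) -> PU u -> ~ collapse_bound t u ->
  exists t', collapse_defined t' /\ R t' t /\ collapse t' = u.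
Proof.
  intros Ht Hu Hnu.
  assert (Hex : exists t', PT t' /\ R t' t /\ ~ Q (collapse t') u).
  { apply NNPP. intros N. apply Hnu. split; [exact Hu|]. intros t' L Ht'.
    apply NNPP. intros Hn. apply N. eauto. }
  destruct (wf_min R_wf _ Hex) as [t' [[Ht' [L Hn]] Hmin]].
  assert (D' : collapse_defined t') by exact (Ht t' Ht' L).
  exists t'. split; [exact D'|split; [exact L|]].
  destruct (Q_total _ _ (collapse_in t' D') Hu) as [Lq|[E|Lq]]; [contradiction|exact E|].
  exfalso. apply (proj2 (collapse_least t' D') u); [|exact Lq].
  split; [exact Hu|]. intros s Ls Hs. apply NNPP. intros Hns.
  exact (Hmin s (conj Hs (conj (R_trans _ _ _ Ls L) Hns)) Ls).
Qed.

Lemma collapse_image_down t u : collapse_defined t -> PU u -> Q u (collapse t) ->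
  exists t', collapse_defined t' /\ collapse t' = u.
Proof.
  intros Ht Hu L. destruct (collapse_hits t u) as [t' [D' [_ E]]]; eauto.
  - intros s Hs Ls. exact (collapse_defined_down t s Ht Hs Ls).
  - intros Hab. exact (proj2 (collapse_least t Ht) u Hab L).
Qed.

Lemma well_order_comparison :
  (exists c : T -> U, (forall t, PT t -> PU (c t)) /\
     (forall t t', PT t -> PT t' -> R t t' -> Q (c t) (c t')) /\
     (forall t u, PT t -> PU u -> Q u (c t) -> exists t', PT t' /\ c t' = u)) \/
  (exists (t0 : T) (d : U -> T), PT t0 /\
     (forall u, PU u -> PT (d u) /\ R (d u) t0) /\
     (forall u u', PU u -> PU u' -> Q u u' -> R (d u) (d u'))).
Proof.
  destruct (classic (forall t, PT t -> collapse_defined t)) as [All|N]; [left|right].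
  - exists collapse. split; [|split].
    + intros t Ht. exact (collapse_in t (All t Ht)).
    + intros t t' Ht Ht' L. exact (collapse_increasing t' t (All t' Ht') Ht L).
    + intros t u Ht Hu L. destruct (collapse_image_down t u (All t Ht) Hu L) as [t' [[Ht' _] E]]. eauto.
  - assert (Hex : exists t0, PT t0 /\ ~ exists u, collapse_bound t0 u).
    { apply NNPP. intros M. apply N. intros t Ht. split; [exact Ht|].
      intros t' Ht' _. apply NNPP. intros Hn. apply M. eauto. }
    destruct (wf_min R_wf _ Hex) as [t0 [[Ht0 Hn0] Hmin]].
    assert (Below : forall s, PT s -> R s t0 -> collapse_defined s).
    { intros s Hs Ls. split; [exact Hs|]. intros s' Hs' Hs's. apply NNPP. intros Hn.
      apply (Hmin s'); [split; assumption|].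
      destruct Hs's as [->|L]; [exact Ls|exact (R_trans _ _ _ L Ls)]. }
    assert (Hit : forall u, PU u -> exists t, collapse_defined t /\ R t t0 /\ collapse t = u).
    { intros u Hu. apply collapse_hits; [exact Below|exact Hu|intros Hab; apply Hn0; eauto]. }
    assert (Hd : forall u, exists t, PU u -> collapse_defined t /\ R t t0 /\ collapse t = u).
    { intros u. destruct (classic (PU u)) as [Hu|Hu]; [destruct (Hit u Hu) as [t Ht]; eauto|].
      exists t0. intros; contradiction. }
    apply choice in Hd. destruct Hd as [d Hd].
    exists t0, d. split; [exact Ht0|split].
    + intros u Hu. destruct (Hd u Hu) as [[Hdu _] [L _]]. split; assumption.
    + intros u u' Hu Hu' L. destruct (Hd u Hu) as [Du [_ Eu]], (Hd u' Hu') as [Du' [_ Eu']].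
      apply (increasing_reflects collapse_defined collapse Q_wf); [| |exact Du|exact Du'|congruence].
      * intros a b Ha Hb. exact (R_total a b (proj1 Ha) (proj1 Hb)).
      * intros a b Ha Hb L'. exact (collapse_increasing b a Hb (proj1 Ha) L').
Qed.

End Comparison.

Notation "f .[ d ]" := (proj1_sig f d) (at level 2, left associativity, format "f .[ d ]").

Definition supported {D : Type} (P : D -> Prop) (f : omega_pow D) : Prop :=
  forall d, f.[d] <> 0 -> P d.

Lemma opow_ext {D : Type} (f g : omega_pow D) : (forall d, f.[d] = g.[d]) -> f = g.
Proof.
  destruct f as [f pf], g as [g pg]. simpl. intros H.
  apply functional_extensionality in H. subst g. f_equal. apply proof_irrelevance.
Qed.

Definition opow_zero {D : Type} : omega_pow D :=
  exist _ (fun _ => 0) (ex_intro _ nil (fun d H => False_ind _ (H eq_refl))).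

Definition upd_fun {D : Type} (f : D -> nat) (c : D) (v : nat) : D -> nat :=
  fun e => if excluded_middle_informative (e = c) then v else f e.

Lemma upd_finsupp {D : Type} (f : omega_pow D) c v : finsupp (upd_fun (proj1_sig f) c v).
Proof.
  destruct (proj2_sig f) as [l Hl]. exists (c :: l). intros d Hd. unfold upd_fun in Hd.
  destruct (excluded_middle_informative (d = c)) as [->|Hn]; [left; reflexivity|right; auto].
Qed.

Definition upd {D : Type} (f : omega_pow D) (c : D) (v : nat) : omega_pow D :=
  exist _ (upd_fun (proj1_sig f) c v) (upd_finsupp f c v).

Lemma upd_at {D : Type} (f : omega_pow D) c v : (upd f c v).[c] = v.
Proof. simpl. unfold upd_fun. destruct (excluded_middle_informative (c = c)); congruence. Qed.

Lemma upd_ne {D : Type} (f : omega_pow D) c v e : e <> c -> (upd f c v).[e] = f.[e].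
Proof. intros H. simpl. unfold upd_fun. destruct (excluded_middle_informative (e = c)); congruence. Qed.

Definition inc {D : Type} (f : omega_pow D) (c : D) : omega_pow D := upd f c (S f.[c]).

Section OmegaPower.
Context {D : Type} {ltD : D -> D -> Prop} (wo : is_well_order ltD).
Local Notation leD := (le_of ltD).
Local Notation ltX := (opow_lt ltD).

Lemma supported_le_zero c (f : omega_pow D) e : supported (fun d => leD d c) f -> ltD c e -> f.[e] = 0.
Proof.
  intros Hf L. apply NNPP. intros He.
  exact (wo_irrefl wo _ (wo_le_lt_trans wo _ _ _ (Hf e He) L)).
Qed.

Lemma opow_top (f : omega_pow D) :
  f = opow_zero \/ exists t, f.[t] <> 0 /\ supported (fun d => leD d t) f.
Proof.
  destruct (classic (exists d, f.[d] <> 0)) as [H|N].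
  - right. destruct (proj2_sig f) as [l Hl].
    destruct (wo_finite_max wo l _ Hl H) as [t [Ht Hmax]]. eauto.
  - left. apply opow_ext. intros d. apply NNPP. intros Hd. eauto.
Qed.

Lemma opow_lt_zero (f : omega_pow D) : ~ ltX f opow_zero.
Proof. intros [d [Hd _]]. simpl in Hd. lia. Qed.

Lemma opow_lt_irrefl f : ~ ltX f f.
Proof. intros [d [H _]]. lia. Qed.

Lemma opow_lt_trans f g h : ltX f g -> ltX g h -> ltX f h.
Proof.
  intros [d1 [H1 E1]] [d2 [H2 E2]].
  destruct (wo_total wo d1 d2) as [L|[<-|L]].
  - exists d2. rewrite (E1 d2 L). split; [exact H2|].
    intros e He. rewrite (E1 e (wo_trans wo _ _ _ L He)). apply E2. exact He.
  - exists d1. split; [lia|]. intros e He. rewrite E1, E2; auto.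
  - exists d1. rewrite <- (E2 d1 L). split; [exact H1|].
    intros e He. rewrite (E1 e He). apply E2. exact (wo_trans wo _ _ _ L He).
Qed.

Lemma opow_lt_total f g : ltX f g \/ f = g \/ ltX g f.
Proof.
  destruct (classic (exists d, f.[d] <> g.[d])) as [Hd|N].
  - destruct (proj2_sig f) as [l1 H1], (proj2_sig g) as [l2 H2].
    destruct (wo_finite_max wo (l1 ++ l2) (fun d => f.[d] <> g.[d])) as [m [Hm Hmax]]; [|exact Hd|].
    { intros d Hne. apply in_or_app. destruct (Nat.eq_dec (f.[d]) 0); [right; apply H2|left; apply H1]; lia. }
    assert (Eq : forall e, ltD m e -> f.[e] = g.[e]).
    { intros e L. apply NNPP. intros Hne. exact (wo_irrefl wo _ (wo_lt_le_trans wo _ _ _ L (Hmax e Hne))). }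
    destruct (Nat.lt_gt_cases (f.[m]) (g.[m])) as [[L|L] _]; [exact Hm| |].
    + left. exists m. auto.
    + right; right. exists m. split; [exact L|]. intros e He. symmetry. auto.
  - right; left. apply opow_ext. intros d. apply NNPP. eauto.
Qed.

Lemma supported_le_down c f g : supported (fun d => leD d c) f -> ltX g f -> supported (fun d => leD d c) g.
Proof.
  intros Hf [d [Hd E]] e He.
  destruct (wo_total wo d e) as [L|[<-|L]].
  - apply Hf. rewrite <- (E e L). exact He.
  - apply Hf. lia.
  - right. exact (wo_lt_le_trans wo _ _ _ L (Hf d ltac:(lia))).
Qed.

Lemma supported_le_restrict c f : supported (fun d => leD d c) f -> supported (fun d => ltD d c) (upd f c 0).
Proof.
  intros Hf e He. destruct (classic (e = c)) as [->|Hec]; [rewrite upd_at in He; lia|].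
  rewrite upd_ne in He by exact Hec. destruct (Hf e He) as [E|L]; [contradiction|exact L].
Qed.

Lemma opow_lt_split c f g : supported (fun d => leD d c) g -> ltX f g ->
  f.[c] < g.[c] \/ (f.[c] = g.[c] /\ ltX (upd f c 0) (upd g c 0)).
Proof.
  intros Hg [d [Hd E]].
  destruct (wo_total wo d c) as [L|[->|L]].
  - right. split; [exact (E c L)|]. exists d.
    assert (Hdc : d <> c) by (intros ->; exact (wo_irrefl wo _ L)).
    rewrite !upd_ne by exact Hdc. split; [exact Hd|].
    intros e He. destruct (classic (e = c)) as [->|Hec]; [rewrite !upd_at; reflexivity|].
    rewrite !upd_ne by exact Hec. auto.
  - left. exact Hd.
  - exfalso. exact (wo_irrefl wo _ (wo_le_lt_trans wo _ _ _ (Hg d ltac:(lia)) L)).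
Qed.

Lemma opow_lt_at_top c f g : supported (fun d => leD d c) f -> supported (fun d => leD d c) g ->
  f.[c] < g.[c] -> ltX f g.
Proof.
  intros Hf Hg L. exists c. split; [exact L|]. intros e He.
  rewrite (supported_le_zero c f e Hf He), (supported_le_zero c g e Hg He). reflexivity.
Qed.

Lemma opow_lt_upd c v f g : supported (fun d => ltD d c) g -> ltX f g -> ltX (upd f c v) (upd g c v).
Proof.
  intros Hg [d [Hd E]]. assert (Hdc : d <> c) by (intros ->; exact (wo_irrefl wo _ (Hg c ltac:(lia)))).
  exists d. rewrite !upd_ne by exact Hdc. split; [exact Hd|].
  intros e He. destruct (classic (e = c)) as [->|Hec]; [rewrite !upd_at; reflexivity|].
  rewrite !upd_ne by exact Hec. auto.
Qed.

Lemma opow_Acc_of_segments (P : D -> Prop) :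
  (forall t, P t -> forall f, supported (fun d => leD d t) f -> Acc ltX f) ->
  forall f, supported P f -> Acc ltX f.
Proof.
  intros H f Hf. destruct (opow_top f) as [->|[t [Ht Htop]]].
  - constructor. intros g Hg. destruct (opow_lt_zero g Hg).
  - exact (H t (Hf t Ht) f Htop).
Qed.

(* Lexicographic induction on the value at [c] and on the restriction below [c]. *)
Lemma opow_Acc_succ c : (forall r, supported (fun d => ltD d c) r -> Acc ltX r) ->
  forall f, supported (fun d => leD d c) f -> Acc ltX f.
Proof.
  intros Hlow f Hf. remember (f.[c]) as n eqn:En. revert f Hf En.
  induction (lt_wf n) as [n _ IHn]. intros f Hf En.
  assert (Hr := Hlow _ (supported_le_restrict c f Hf)).
  remember (upd f c 0) as r eqn:Er. revert f Hf En Er.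
  induction Hr as [r _ IHr]. intros f Hf En Er. constructor. intros g Hgf.
  assert (Hg := supported_le_down c f g Hf Hgf).
  destruct (opow_lt_split c g f Hf Hgf) as [L|[E L]].
  - exact (IHn (g.[c]) ltac:(lia) g Hg eq_refl).
  - subst r. exact (IHr _ L g Hg ltac:(congruence) eq_refl).
Qed.

Lemma opow_lt_wf : well_founded ltX.
Proof.
  assert (H : forall c f, supported (fun d => leD d c) f -> Acc ltX f).
  { intros c. induction (wo_wf wo c) as [c _ IH]. apply opow_Acc_succ. apply opow_Acc_of_segments. exact IH. }
  intros f. apply (opow_Acc_of_segments (fun _ => True)); [intros t _; apply H|intros d _; exact I].
Qed.

Lemma opow_well_order : is_well_order ltX.
Proof. exact (conj opow_lt_irrefl (conj opow_lt_trans (conj opow_lt_total opow_lt_wf))). Qed.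

Lemma supported_le_mono b c f : leD b c -> supported (fun d => leD d b) f -> supported (fun d => leD d c) f.
Proof. intros L Hf d Hd. exact (wo_le_trans wo _ _ _ (Hf d Hd) L). Qed.

Lemma supported_inc c f : supported (fun d => leD d c) f -> supported (fun d => leD d c) (inc f c).
Proof.
  intros Hf e He. unfold inc in He. destruct (classic (e = c)) as [->|Hec]; [left; reflexivity|].
  rewrite upd_ne in He by exact Hec. exact (Hf e He).
Qed.

Lemma inc_lt c f g : ltX f g -> ltX (inc f c) (inc g c).
Proof.
  intros [d [Hd E]]. exists d. unfold inc. split.
  - destruct (classic (d = c)) as [->|Hdc]; [rewrite !upd_at; lia|rewrite !upd_ne by exact Hdc; exact Hd].
  - intros e He. destruct (classic (e = c)) as [->|Hec]; [rewrite !upd_at, (E c He); reflexivity|].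
    rewrite !upd_ne by exact Hec. auto.
Qed.

End OmegaPower.

Lemma infinite_pigeonhole (K : nat -> bool) :
  exists (k : bool) (m : nat -> nat), (forall j, K (m j) = k) /\ (forall j j', j < j' -> m j < m j').
Proof.
  assert (Hk : exists k, forall N, exists n, N <= n /\ K n = k).
  { destruct (classic (forall N, exists n, N <= n /\ K n = true)) as [H|H]; [eauto|].
    apply not_all_ex_not in H. destruct H as [N0 HN0]. exists false. intros N.
    exists (max N N0). split; [lia|]. destruct (K (max N N0)) eqn:E; [|reflexivity].
    exfalso. apply HN0. exists (max N N0). split; [lia|exact E]. }
  destruct Hk as [k Hk]. destruct (choice _ Hk) as [sel Hsel].
  pose (m := fix m j := match j with O => sel 0 | S j => sel (S (m j)) end).
  assert (Step : forall j, m j < m (S j)) by (intros j; specialize (Hsel (S (m j))); simpl; lia).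
  exists k, m. split.
  - intros [|j]; apply Hsel.
  - intros j j' L. induction L as [|j' _ IH]; [apply Step|specialize (Step j'); lia].
Qed.

Section Indecomposable.
Context {D : Type} {ltD : D -> D -> Prop} (wo : is_well_order ltD).
Local Notation leD := (le_of ltD).
Local Notation ltX := (opow_lt ltD).

Definition homogeneous_map (P : D -> Prop) (col : omega_pow D -> bool)
    (g : omega_pow D -> omega_pow D) (k : bool) : Prop :=
  (forall f, supported P f -> supported P (g f)) /\
  (forall f f', supported P f -> supported P f' -> ltX f f' -> ltX (g f) (g f')) /\
  (forall f, supported P f -> col (g f) = k).

Definition homogeneous_copies (P : D -> Prop) : Prop :=
  forall col, exists g k, homogeneous_map P col g k.

Lemma homogeneous_empty (P : D -> Prop) : (forall d, ~ P d) -> homogeneous_copies P.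
Proof.
  intros HP col. assert (Z : forall f, supported P f -> f = opow_zero).
  { intros f Hf. apply opow_ext. intros d. apply NNPP. intros Hd. exact (HP d (Hf d Hd)). }
  exists (fun f => f), (col opow_zero). split; [|split]; auto.
  intros f Hf. rewrite (Z f Hf). reflexivity.
Qed.

(* The functions supported below [c] form [omega] blocks, indexed by the value at [c]:
   pick a homogeneous copy in each block and infinitely many blocks of the same colour. *)
Lemma homogeneous_succ c :
  homogeneous_copies (fun d => ltD d c) -> homogeneous_copies (fun d => leD d c).
Proof.
  intros Hc col.
  destruct (choice _ (fun n => Hc (fun f => col (upd f c n)))) as [g Hg].
  destruct (choice _ Hg) as [K HK].
  destruct (infinite_pigeonhole K) as [k [m [Hmk Hm]]].
  exists (fun f => upd (g (m (f.[c])) (upd f c 0)) c (m (f.[c]))), k.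
  assert (Out : forall f, supported (fun d => leD d c) f ->
    supported (fun d => leD d c) (upd (g (m (f.[c])) (upd f c 0)) c (m (f.[c])))).
  { intros f Hf e He. destruct (classic (e = c)) as [->|Hec]; [left; reflexivity|].
    rewrite upd_ne in He by exact Hec. right.
    exact (proj1 (HK (m (f.[c]))) _ (supported_le_restrict c f Hf) e He). }
  split; [exact Out|split].
  - intros f f' Hf Hf' L. destruct (opow_lt_split wo c f f' Hf' L) as [Lc|[Ec Lr]].
    + apply (opow_lt_at_top wo c); [apply Out; exact Hf|apply Out; exact Hf'|].
      rewrite !upd_at. apply Hm. exact Lc.
    + rewrite Ec. apply (opow_lt_upd wo).
      * exact (proj1 (HK _) _ (supported_le_restrict c f' Hf')).
      * apply (proj1 (proj2 (HK _))); [apply (supported_le_restrict)..|exact Lr]; assumption.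
  - intros f Hf. rewrite (proj2 (proj2 (HK _))) by exact (supported_le_restrict c f Hf). apply Hmk.
Qed.

Lemma least_bounding_block (P Q : D -> Prop) : (exists d, P d) ->
  (forall b, P b -> exists c, P c /\ leD b c /\ Q c) ->
  exists beta : omega_pow D -> D, forall f, supported P f ->
    (P (beta f) /\ Q (beta f) /\ supported (fun d => leD d (beta f)) f) /\
    forall c, P c -> Q c -> supported (fun d => leD d c) f -> leD (beta f) c.
Proof.
  intros [d0 Pd0] Hcof.
  apply (choice (fun f c => supported P f -> (P c /\ Q c /\ supported (fun d => leD d c) f) /\
    forall c', P c' -> Q c' -> supported (fun d => leD d c') f -> leD c c')). intros f.
  destruct (classic (supported P f)) as [Hf|Hf]; [|exists d0; intros; contradiction].
  assert (Hex : exists c, P c /\ Q c /\ supported (fun d => leD d c) f).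
  { assert (Hbd : exists b, P b /\ supported (fun d => leD d b) f).
    { destruct (opow_top wo f) as [->|[t [Ht Htop]]]; [|exists t; auto].
      exists d0. split; [exact Pd0|]. intros d Hd. simpl in Hd. lia. }
    destruct Hbd as [b [Pb Hfb]]. destruct (Hcof b Pb) as [c [Pc [L Qc]]].
    exists c. split; [exact Pc|split; [exact Qc|exact (supported_le_mono wo b c f L Hfb)]]. }
  destruct (wf_min (wo_wf wo) _ Hex) as [c [Hc Hmin]]. exists c. intros _. split; [exact Hc|].
  intros c' Pc' Qc' Hfc'. apply (wo_not_lt wo). intros L. exact (Hmin c' (conj Pc' (conj Qc' Hfc')) L).
Qed.

(* For [f] supported in [P], work inside the least block [c] of a cofinal colour bounding [f]
   and push the image up to be non-zero at [c]: images from different blocks are then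
   compared at the larger block. *)
Lemma homogeneous_downset (P : D -> Prop) :
  (forall a b, P b -> ltD a b -> P a) -> (exists d, P d) ->
  (forall b, P b -> homogeneous_copies (fun d => leD d b)) -> homogeneous_copies P.
Proof.
  intros Pdown [d0 Pd0] Hb col.
  assert (Hg : forall b, exists gk : (omega_pow D -> omega_pow D) * bool, P b ->
    homogeneous_map (fun d => leD d b) (fun f => col (inc f b)) (fst gk) (snd gk)).
  { intros b. destruct (classic (P b)) as [Pb|Pb].
    - destruct (Hb b Pb (fun f => col (inc f b))) as [g [k H]]. exists (g, k). auto.
    - exists ((fun f => f), true). intros; contradiction. }
  destruct (choice _ Hg) as [gk Hgk].
  destruct (wo_cofinal_colour wo P (fun b => snd (gk b))) as [k Hk].
  destruct (least_bounding_block P (fun c => snd (gk c) = k) (ex_intro _ d0 Pd0) Hk)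
    as [beta Hbeta].
  exists (fun f => inc (fst (gk (beta f)) f) (beta f)), k.
  assert (Out : forall f, supported P f ->
    supported (fun d => leD d (beta f)) (inc (fst (gk (beta f)) f) (beta f))).
  { intros f Hf. destruct (Hbeta f Hf) as [[Pc [_ Hfc]] _].
    apply supported_inc. exact (proj1 (Hgk _ Pc) f Hfc). }
  split; [|split].
  - intros f Hf d Hd. destruct (Hbeta f Hf) as [[Pc _] _].
    destruct (Out f Hf d Hd) as [->|L]; [exact Pc|exact (Pdown _ _ Pc L)].
  - intros f f' Hf Hf' L. destruct (Hbeta f Hf) as [[Pc [_ Hfc]] _].
    destruct (Hbeta f' Hf') as [[Pc' [Kc' Hfc']] _].
    assert (Le : leD (beta f) (beta f')).
    { apply (proj2 (Hbeta f Hf)); [exact Pc'|exact Kc'|exact (supported_le_down wo _ _ _ Hfc' L)]. }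
    destruct Le as [E|Lc].
    + rewrite <- E. apply inc_lt. apply (proj1 (proj2 (Hgk _ Pc))); [exact Hfc|rewrite E; exact Hfc'|exact L].
    + apply (opow_lt_at_top wo (beta f')).
      * exact (supported_le_mono wo _ _ _ (or_intror Lc) (Out f Hf)).
      * exact (Out f' Hf').
      * rewrite (supported_le_zero wo _ _ _ (Out f Hf) Lc). unfold inc. rewrite upd_at. lia.
  - intros f Hf. destruct (Hbeta f Hf) as [[Pc [Kc Hfc]] _].
    rewrite (proj2 (proj2 (Hgk _ Pc)) f Hfc). exact Kc.
Qed.

Lemma homogeneous_segments c : homogeneous_copies (fun d => leD d c).
Proof.
  induction (wo_wf wo c) as [c _ IH]. apply homogeneous_succ.
  destruct (classic (exists d, ltD d c)) as [Hne|Hem].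
  - apply homogeneous_downset; [intros a b Hb L; exact (wo_trans wo _ _ _ L Hb)|exact Hne|exact IH].
  - apply homogeneous_empty. intros d Hd. eauto.
Qed.

Lemma homogeneous_all : homogeneous_copies (fun _ => True).
Proof.
  destruct (classic (exists d : D, True)) as [Hne|Hem].
  - apply homogeneous_downset; auto. intros b _. apply homogeneous_segments.
  - apply homogeneous_empty. intros d _. eauto.
Qed.

Lemma embeds_union (A B : omega_pow D -> Prop) :
  embeds_into ltX (setunion A B) -> embeds_into ltX A \/ embeds_into ltX B.
Proof.
  intros [h [Hh Hiff]].
  destruct (homogeneous_all (fun x => if excluded_middle_informative (A (h x)) then true else false))
    as [g [k [_ [Hg Hcol]]]].
  assert (Emb : forall x y, ltX x y <-> ltX (h (g x)) (h (g y))).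
  { assert (Incr : forall x y, ltX x y -> ltX (h (g x)) (h (g y))).
    { intros x y L. apply (proj1 (Hiff _ _)). apply Hg; [intros ? ?; exact I..|exact L]. }
    intros x y. split; [apply Incr|].
    apply (increasing_reflects (fun _ => True) (fun z => h (g z)) (opow_lt_wf wo)); auto.
    intros a b _ _. apply (opow_lt_total wo). }
  destruct k; [left|right]; exists (fun x => h (g x)); (split; [|exact Emb]); intros x;
    specialize (Hcol x (fun _ _ => I)); simpl in Hcol;
    destruct (excluded_middle_informative (A (h (g x)))); try discriminate.
  - assumption.
  - destruct (Hh (g x)); [contradiction|assumption].
Qed.

End Indecomposable.

Section Copies.
Context {D : Type} {ltD : D -> D -> Prop} (wo : is_well_order ltD).
Local Notation ltX := (opow_lt ltD).
Local Notation small := (I_X ltX).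
Local Notation PPX := (PP ltX).

(* The collapse of [A] onto an initial segment of [omega^delta] cannot stop short, since
   [omega^delta] embeds into [A] and no increasing self-map of a well-order goes down. *)
Lemma copy_of_embeds (A : omega_pow D -> Prop) : embeds_into ltX A -> PPX A.
Proof.
  intros [h [Hh Hhiff]].
  assert (woX := opow_well_order wo).
  assert (Htot : forall a b, A a -> A b -> ltX a b \/ a = b \/ ltX b a) by (intros; apply (wo_total woX)).
  destruct (well_order_comparison ltX ltX A (fun _ => True) (opow_lt_wf wo) (wo_trans woX) Htot
              (opow_lt_wf wo) (fun a b _ _ => wo_total woX a b) (inhabits opow_zero))
    as [[c [_ [Hc Hdown]]]|[t0 [d [_ [Hd Hdincr]]]]].
  - assert (Onto : forall x, exists a, A a /\ c a = x).
    { intros x. apply NNPP. intros N.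
      assert (Below : forall a, A a -> ltX (c a) x).
      { intros a Ha. destruct (wo_total woX (c a) x) as [L|[E|L]]; [exact L|exfalso; eauto|].
        destruct (Hdown a x Ha I L) as [a' Ha']. exfalso. eauto. }
      apply (wo_increasing_inflationary woX (fun z => c (h z))) with x; [|exact (Below _ (Hh x))].
      intros y z L. apply Hc; [apply Hh..|apply (proj1 (Hhiff _ _)); exact L]. }
    destruct (choice _ Onto) as [d Hd].
    exists d. split; [intros x; apply Hd|split].
    + intros a Ha. exists (c a). destruct (Hd (c a)) as [Ada Eda].
      exact (increasing_injective A c (opow_lt_wf wo) Htot Hc _ _ Ada Ha Eda).
    + intros x y. destruct (Hd x) as [Ax Ex], (Hd y) as [Ay Ey]. split.
      * intros L. apply (increasing_reflects A c (opow_lt_wf wo) Htot Hc _ _ Ax Ay). rewrite Ex, Ey. exact L.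
      * intros L. rewrite <- Ex, <- Ey. exact (Hc _ _ Ax Ay L).
  - exfalso. apply (wo_increasing_inflationary woX d) with t0; [|apply Hd; exact I].
    intros x y L. apply Hdincr; [exact I..|exact L].
Qed.

Lemma embeds_of_copy (A : omega_pow D -> Prop) : PPX A -> embeds_into ltX A.
Proof. intros [h [H1 [_ H3]]]. exists h. split; assumption. Qed.

Lemma copy_iff_positive (A : omega_pow D -> Prop) : PPX A <-> ~ small A.
Proof.
  unfold I_X. split.
  - intros H N. apply N. apply embeds_of_copy. exact H.
  - intros H. apply copy_of_embeds. apply NNPP. exact H.
Qed.

Lemma small_subset (A B : omega_pow D -> Prop) : subset A B -> small B -> small A.
Proof. intros S HB [h [Hh Hi]]. apply HB. exists h. split; [intros x; apply S; apply Hh|exact Hi]. Qed.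

Lemma small_union (A B : omega_pow D -> Prop) : small A -> small B -> small (setunion A B).
Proof. intros HA HB H. destruct (embeds_union wo A B H); contradiction. Qed.

Lemma small_is_ideal : is_ideal small.
Proof.
  split; [|split; [|split]].
  - intros [h [Hh _]]. exact (Hh opow_zero).
  - exact small_subset.
  - exact small_union.
  - intros H. apply H. exists (fun x => x). split; [intros; exact I|tauto].
Qed.

Lemma positive_setminus (A B : omega_pow D -> Prop) : ~ small A -> small (setminus A B) -> ~ small B.
Proof.
  intros HA HAB HB. apply HA. apply (small_subset _ (setunion (setminus A B) B)); [|apply small_union; assumption].
  intros x Ha. destruct (classic (B x)); [right; assumption|left; split; assumption].
Qed.

Lemma sep_le_iff_small (A B : omega_pow D -> Prop) : PPX A -> PPX B ->
  (sep_le PPX subset A B <-> small (setminus A B)).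
Proof.
  intros PA PB. split.
  - intros Hs Hemb.
    destruct (Hs _ (copy_of_embeds _ Hemb) (fun x H => proj1 H)) as [s [Ps [S1 S2]]].
    destruct (embeds_of_copy s Ps) as [h [Hh _]].
    destruct (S1 _ (Hh opow_zero)) as [_ NB]. exact (NB (S2 _ (Hh opow_zero))).
  - intros HI r Pr Hr. exists (fun x => r x /\ B x). split; [|split; intros x H; apply H].
    apply copy_iff_positive. apply (positive_setminus r); [apply copy_iff_positive; exact Pr|].
    apply (small_subset _ (setminus A B)); [|exact HI].
    intros x [Hrx HnB]. split; [apply Hr; exact Hrx|intros HB; exact (HnB (conj Hrx HB))].
Qed.

Lemma sq_class_iff_bq_class (p : omega_pow D -> Prop) : PPX p -> forall q,
  (PPX q /\ sep_le PPX subset p q /\ sep_le PPX subset q p) <-> (small (setminus p q) /\ small (setminus q p)).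
Proof.
  intros Pp q. split.
  - intros [Pq [S1 S2]]. split; apply sep_le_iff_small; assumption.
  - intros [S1 S2]. assert (Pq : PPX q).
    { apply copy_iff_positive. apply (positive_setminus p); [apply copy_iff_positive|]; assumption. }
    split; [exact Pq|split; apply sep_le_iff_small; assumption].
Qed.

Lemma sq_class_is_bq_class (C : (omega_pow D -> Prop) -> Prop) :
  (exists p, PPX p /\ forall q, C q <-> (PPX q /\ sep_le PPX subset p q /\ sep_le PPX subset q p)) <->
  (exists A, ~ small A /\ forall B, C B <-> (small (setminus A B) /\ small (setminus B A))).
Proof.
  split; intros [p [Pp Hp]]; exists p.
  - split; [apply copy_iff_positive; exact Pp|]. intros q. rewrite Hp. apply sq_class_iff_bq_class. exact Pp.
  - assert (Pp' : PPX p) by (apply copy_iff_positive; exact Pp).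
    split; [exact Pp'|]. intros q. rewrite Hp. symmetry. apply sq_class_iff_bq_class. exact Pp'.
Qed.

(* Both quotients have literally the same classes, so the isomorphism is the identity on them. *)
Definition sq_to_bq (a : sq_car PPX subset) : bq_pos small :=
  exist _ (proj1_sig a) (proj1 (sq_class_is_bq_class _) (proj2_sig a)).

Lemma sq_iso_bq : exists f : sq_car PPX subset -> bq_pos small,
  (forall a b, f a = f b -> a = b) /\ (forall c, exists a, f a = c) /\
  (forall a b, sq_le PPX subset a b <-> bq_le small (f a) (f b)).
Proof.
  exists sq_to_bq. split; [|split].
  - intros [a Ha] [b Hb] E. apply subset_eq_compat. exact (f_equal (@proj1_sig _ _) E).
  - intros [C HC]. exists (exist _ C (proj2 (sq_class_is_bq_class C) HC)). apply subset_eq_compat. reflexivity.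
  - assert (Mem : forall (a : sq_car PPX subset) p, proj1_sig a p -> PPX p).
    { intros a p Hp. destruct (proj2_sig a) as [r [_ Hr]]. apply (Hr p). exact Hp. }
    intros a b. split; intros [p [q [Hp [Hq S]]]]; exists p, q; (split; [exact Hp|split; [exact Hq|]]);
      apply (sep_le_iff_small p q (Mem a p Hp) (Mem b q Hq)); exact S.
Qed.

End Copies.

Lemma slexprod_well_order {A B : Type} {ltA : A -> A -> Prop} {ltB : B -> B -> Prop} :
  is_well_order ltA -> is_well_order ltB -> is_well_order (slexprod A B ltA ltB).
Proof.
  intros woA woB.
  assert (Wf : well_founded (slexprod A B ltA ltB)) by exact (wf_slexprod _ _ _ _ (wo_wf woA) (wo_wf woB)).
  split; [exact (wf_irrefl Wf)|split; [|split; [|exact Wf]]].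
  - intros p q r H1 H2. destruct H1 as [a a' b b' L1|a b b' L1];
      inversion H2 as [? ? ? ? L2|? ? ? L2]; subst.
    + left. exact (wo_trans woA _ _ _ L1 L2).
    + left. exact L1.
    + left. exact L2.
    + right. exact (wo_trans woB _ _ _ L1 L2).
  - intros [a b] [a' b']. destruct (wo_total woA a a') as [L|[<-|L]]; [left; left; exact L| |right; right; left; exact L].
    destruct (wo_total woB b b') as [L|[<-|L]]; [left; right; exact L|right; left; reflexivity|right; right; right; exact L].
Qed.

Lemma slexprod_fst {A B : Type} {ltA : A -> A -> Prop} {ltB : B -> B -> Prop} (p q : A * B) :
  slexprod A B ltA ltB p q -> le_of ltA (fst p) (fst q).
Proof. intros H. destruct H; [right|left]; simpl; auto. Qed.

Lemma well_order_inverse_image {T U : Type} {lt : U -> U -> Prop} (f : T -> U) :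
  Injective f -> is_well_order lt -> is_well_order (fun x y => lt (f x) (f y)).
Proof.
  intros Hf wo. split; [|split; [|split]].
  - intros x. apply (wo_irrefl wo).
  - intros x y z. apply (wo_trans wo).
  - intros x y. destruct (wo_total wo (f x) (f y)) as [L|[E|L]]; auto.
  - exact (wf_inverse_image _ _ lt f (wo_wf wo)).
Qed.

Lemma no_injection_into_list {A : Type} (l : list A) (e : nat -> A) : Injective e -> ~ (forall n, In (e n) l).
Proof.
  intros Einj Hin.
  assert (ND : NoDup (map e (seq 0 (S (length l))))) by (apply Injective_map_NoDup; [exact Einj|apply seq_NoDup]).
  assert (Inc : incl (map e (seq 0 (S (length l)))) l).
  { intros a Ha. apply in_map_iff in Ha. destruct Ha as [n [<- _]]. apply Hin. }
  pose proof (NoDup_incl_length ND Inc) as H. rewrite length_map, length_seq in H. lia.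
Qed.

Section Injections.
Context {T : Type}.

Definition injects (A B : T -> Prop) : Prop := exists f : T -> T,
  (forall a, A a -> B (f a)) /\ (forall a b, A a -> A b -> f a = f b -> a = b).

Definition infinite (A : T -> Prop) : Prop := exists e : nat -> T, (forall n, A (e n)) /\ Injective e.

Definition has_pairing (A : T -> Prop) : Prop := exists pr : T * T -> T,
  (forall p, A (fst p) -> A (snd p) -> A (pr p)) /\
  (forall p q, A (fst p) -> A (snd p) -> A (fst q) -> A (snd q) -> pr p = pr q -> p = q).

Lemma injects_trans A1 A2 A3 : injects A1 A2 -> injects A2 A3 -> injects A1 A3.
Proof.
  intros [f [F1 F2]] [g [G1 G2]]. exists (fun x => g (f x)). split; [auto|].
  intros a b Ha Hb E. apply F2; auto.
Qed.

Lemma infinite_injects A B : infinite A -> injects A B -> infinite B.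
Proof.
  intros [e [E1 E2]] [f [F1 F2]]. exists (fun n => f (e n)). split; [auto|].
  intros n m E. apply E2. apply F2; auto.
Qed.

Lemma has_pairing_of_injects A B : injects A B -> (forall d, B d -> A d) -> has_pairing B -> has_pairing A.
Proof.
  intros [f [F1 F2]] Sub [pr [P1 P2]]. exists (fun p => pr (f (fst p), f (snd p))). split.
  - intros p Ha Hb. apply Sub, P1; simpl; auto.
  - intros [a b] [a' b'] Ha Hb Ha' Hb' E. simpl in *.
    injection (P2 (f a, f b) (f a', f b') (F1 a Ha) (F1 b Hb) (F1 a' Ha') (F1 b' Hb') E) as E1 E2.
    f_equal; auto.
Qed.

(* Hilbert's hotel: [e n] moves to [e (S n)] and everything else stays, which frees [e 0]. *)
Definition shift (e : nat -> T) (u : T) : T :=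
  match excluded_middle_informative (exists n, u = e n) with
  | left H => e (S (proj1_sig (constructive_indefinite_description _ H)))
  | right _ => u
  end.

Lemma shift_in (e : nat -> T) (A : T -> Prop) : (forall n, A (e n)) -> forall u, A u -> A (shift e u).
Proof. intros He u Hu. unfold shift. destruct (excluded_middle_informative _); auto. Qed.

Lemma shift_not_first (e : nat -> T) : Injective e -> forall u, shift e u <> e 0.
Proof.
  intros Einj u. unfold shift. destruct (excluded_middle_informative _) as [H|H].
  - intros E. apply Einj in E. discriminate.
  - intros ->. apply H. eauto.
Qed.

Lemma shift_injective (e : nat -> T) : Injective e -> Injective (shift e).
Proof.
  intros Einj u v. unfold shift.
  destruct (excluded_middle_informative (exists n, u = e n)) as [H1|H1],
           (excluded_middle_informative (exists n, v = e n)) as [H2|H2];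
    try destruct (constructive_indefinite_description _ H1) as [n ->];
    try destruct (constructive_indefinite_description _ H2) as [k ->]; simpl; intros E.
  - apply Einj in E. congruence.
  - exfalso. apply H2. eauto.
  - exfalso. apply H1. eauto.
  - exact E.
Qed.

Lemma infinite_from (A : T -> Prop) m : infinite A -> A m ->
  exists e : nat -> T, e 0 = m /\ (forall n, A (e n)) /\ Injective e.
Proof.
  intros [e [E1 E2]] Hm.
  assert (HN : exists N, forall n, e (S (n + N)) <> m).
  { destruct (classic (exists n0, e n0 = m)) as [[n0 <-]|Hno].
    - exists n0. intros n E. apply E2 in E. lia.
    - exists 0. intros n E. apply Hno. eauto. }
  destruct HN as [N HN].
  exists (fun n => match n with 0 => m | S n => e (S (n + N)) end). split; [reflexivity|split].
  - intros [|n]; auto.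
  - intros [|n] [|k] E; auto.
    + exfalso. exact (HN k (eq_sym E)).
    + exfalso. exact (HN n E).
    + apply E2 in E. lia.
Qed.

Lemma injects_remove (A : T -> Prop) m : infinite A -> A m -> injects A (fun d => A d /\ d <> m).
Proof.
  intros HS Hm. destruct (infinite_from A m HS Hm) as [e [E0 [E1 E2]]].
  exists (shift e). split.
  - intros a Ha. split; [exact (shift_in e A E1 a Ha)|rewrite <- E0; exact (shift_not_first e E2 a)].
  - intros a b _ _. apply (shift_injective e E2).
Qed.

Fixpoint encode_list (pr : T * T -> T) (e : nat -> T) (l : list T) : T :=
  match l with
  | nil => e 0
  | x :: l => shift e (pr (x, encode_list pr e l))
  end.

Lemma encode_list_injective (pr : T * T -> T) (e : nat -> T) :
  Injective pr -> Injective e -> Injective (encode_list pr e).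
Proof.
  intros Hpr He l. induction l as [|x l IH]; intros [|x' l'] E; simpl in E.
  - reflexivity.
  - destruct (shift_not_first e He _ (eq_sym E)).
  - destruct (shift_not_first e He _ E).
  - apply (shift_injective e He), Hpr in E. injection E as -> E. f_equal. exact (IH _ E).
Qed.

End Injections.

Section Cardinality.
Context {D : Type} {ltD : D -> D -> Prop} (wo : is_well_order ltD).
Local Notation leD := (le_of ltD).

Definition segment (x : D) : D -> Prop := fun d => ltD d x.

Definition initial (S : D -> Prop) : Prop := forall x, S x -> ~ injects S (segment x).

Lemma segment_finite x : ~ infinite (segment x) -> exists l, forall d, segment x d -> In d l.
Proof.
  induction (wo_wf wo x) as [x _ IH]. intros Hfin.
  destruct (classic (exists y, ltD y x /\ forall d, ltD d x -> leD d y)) as [[y [Hy Hmax]]|Hnm].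
  - destruct (IH y Hy) as [l Hl].
    + intros [e [He Einj]]. apply Hfin. exists e. split; [|exact Einj].
      intros n. exact (wo_trans wo _ _ _ (He n) Hy).
    + exists (y :: l). intros d Hd. destruct (Hmax d Hd) as [->|L]; [left; reflexivity|right; apply Hl; exact L].
  - destruct (classic (exists d, ltD d x)) as [[d0 Hd0]|Hem]; [|exists nil; intros d Hd; apply Hem; eauto].
    exfalso. apply Hfin.
    assert (Next : forall b, exists b', ltD b x -> ltD b b' /\ ltD b' x).
    { intros b. destruct (classic (ltD b x)) as [Hb|Hb]; [|exists b; intros; contradiction].
      apply NNPP. intros N. apply Hnm. exists b. split; [exact Hb|]. intros d Hd.
      apply (wo_not_lt wo). intros L. apply N. exists d. auto. }
    destruct (choice _ Next) as [next Hnext].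
    pose (e := fix e n := match n with 0 => d0 | S n => next (e n) end).
    assert (He : forall n, ltD (e n) x) by (induction n as [|n IHn]; [exact Hd0|exact (proj2 (Hnext _ IHn))]).
    exists e. split; [exact He|]. apply (wo_chain_injective wo). intros k. exact (proj1 (Hnext _ (He k))).
Qed.

Definition pmax (p : D * D) : D := if excluded_middle_informative (ltD (fst p) (snd p)) then snd p else fst p.

Lemma pmax_in p : pmax p = fst p \/ pmax p = snd p.
Proof. unfold pmax. destruct (excluded_middle_informative _); auto. Qed.

Lemma pmax_ge p : leD (fst p) (pmax p) /\ leD (snd p) (pmax p).
Proof.
  unfold pmax. destruct (excluded_middle_informative _) as [L|L].
  - split; [right; exact L|left; reflexivity].
  - split; [left; reflexivity|exact (wo_not_lt wo _ _ L)].
Qed.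

Definition godel_lt (p q : D * D) : Prop :=
  slexprod _ _ ltD (slexprod _ _ ltD ltD) (pmax p, p) (pmax q, q).

Lemma godel_well_order : is_well_order godel_lt.
Proof.
  apply (well_order_inverse_image (fun p => (pmax p, p))); [|exact (slexprod_well_order wo (slexprod_well_order wo wo))].
  intros p q E. injection E as _ E. exact E.
Qed.

Lemma godel_lt_pmax p q : godel_lt p q -> leD (pmax p) (pmax q).
Proof. exact (slexprod_fst (pmax p, p) (pmax q, q)). Qed.

Section Initial.
Variable K : D -> Prop.
Hypothesis K_infinite : infinite K.
Hypothesis K_initial : initial K.
Hypothesis IH : forall x, K x -> infinite (segment x) -> has_pairing (segment x).

Lemma initial_unbounded m : K m -> exists m', K m' /\ ltD m m'.
Proof.
  intros Km. apply NNPP. intros N. apply (K_initial m Km).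
  apply (injects_trans _ _ _ (injects_remove K m K_infinite Km)).
  exists (fun d => d). split; [|auto]. intros a [Ka Ham].
  destruct (wo_total wo a m) as [L|[E|L]]; [exact L|contradiction|exfalso; eauto].
Qed.

Lemma initial_not_into_square x (d : D -> D * D) : K x ->
  (forall u, K u -> segment x (fst (d u)) /\ segment x (snd (d u))) ->
  ~ (forall u v, K u -> K v -> d u = d v -> u = v).
Proof.
  intros Kx Hd Dinj. destruct (classic (infinite (segment x))) as [Inf|Fin].
  - destruct (IH x Kx Inf) as [pr [Pin Pinj]]. apply (K_initial x Kx).
    exists (fun u => pr (d u)). split.
    + intros u Ku. apply Pin; apply Hd; exact Ku.
    + intros u v Ku Kv E. apply Dinj; [exact Ku|exact Kv|]. apply Pinj; try apply Hd; assumption.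
  - destruct (segment_finite x Fin) as [l Hl]. destruct K_infinite as [e [He Einj]].
    apply (no_injection_into_list (list_prod l l) (fun n => d (e n))).
    + intros n m E. apply Einj. apply Dinj; auto.
    + intros n. rewrite (surjective_pairing (d (e n))). apply in_prod; apply Hl; apply Hd; apply He.
Qed.

(* Compare [K * K] in Goedel's order with [K]: if [K] were shorter, it would embed into the
   square of some segment [segment m'] with [m'] in [K]. *)
Lemma initial_pairing : has_pairing K.
Proof.
  assert (woG := godel_well_order).
  set (PT := fun p : D * D => K (fst p) /\ K (snd p)).
  destruct K_infinite as [e0 [He0 _]].
  destruct (well_order_comparison godel_lt ltD PT K (wo_wf woG) (wo_trans woG)
              (fun a b _ _ => wo_total woG a b) (wo_wf wo) (fun a b _ _ => wo_total wo a b) (inhabits (e0 0)))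
    as [[c [Hc [Hincr _]]]|[p0 [d [[Kp1 Kp2] [Hd Hdincr]]]]].
  - exists c. split; [intros p H1 H2; apply Hc; split; assumption|].
    intros p q H1 H2 H3 H4.
    apply (increasing_injective PT c (wo_wf wo) (fun a b _ _ => wo_total woG a b) Hincr); split; assumption.
  - exfalso.
    assert (Km : K (pmax p0)) by (destruct (pmax_in p0) as [-> | ->]; assumption).
    destruct (initial_unbounded _ Km) as [m' [Km' Lm']].
    apply (initial_not_into_square m' d Km').
    + intros u Ku. destruct (Hd u Ku) as [_ L].
      assert (Lu : ltD (pmax (d u)) m') by exact (wo_le_lt_trans wo _ _ _ (godel_lt_pmax _ _ L) Lm').
      destruct (pmax_ge (d u)) as [G1 G2]. split; [exact (wo_le_lt_trans wo _ _ _ G1 Lu)|exact (wo_le_lt_trans wo _ _ _ G2 Lu)].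
    + intros u v Ku Kv. apply (increasing_injective (R := ltD) K d (wo_wf woG)); auto. intros; apply (wo_total wo).
Qed.

End Initial.

Lemma pairing_downset (P : D -> Prop) : (forall a b, P b -> ltD a b -> P a) ->
  (forall x, P x -> infinite (segment x) -> has_pairing (segment x)) -> infinite P -> has_pairing P.
Proof.
  intros Pdown IH Inf.
  destruct (classic (exists x, P x /\ injects P (segment x))) as [Hx|Hx].
  - destruct (wf_min (wo_wf wo) _ Hx) as [y [[Py Iy] Hmin]].
    assert (Sub : forall d, segment y d -> P d) by (intros d Hd; exact (Pdown _ _ Py Hd)).
    apply (has_pairing_of_injects P (segment y) Iy Sub).
    apply initial_pairing.
    + exact (infinite_injects _ _ Inf Iy).
    + intros x Hx' Ix. apply (Hmin x); [|exact Hx']. split; [exact (Sub x Hx')|exact (injects_trans _ _ _ Iy Ix)].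
    + intros x Hx'. apply IH. exact (Sub x Hx').
  - apply initial_pairing; auto. intros x Px Ix. apply Hx. eauto.
Qed.

Lemma pairing_all : infinite (fun _ : D => True) -> has_pairing (fun _ : D => True).
Proof.
  assert (Seg : forall x, infinite (segment x) -> has_pairing (segment x)).
  { intros x. induction (wo_wf wo x) as [x _ IHx].
    apply pairing_downset; [intros a b Hb L; exact (wo_trans wo _ _ _ L Hb)|exact IHx]. }
  apply pairing_downset; auto.
Qed.

Lemma opow_injects_of_chain : (exists e : nat -> D, forall n, ltD (e n) (e (S n))) ->
  exists phi : omega_pow D -> D, Injective phi.
Proof.
  intros [e He]. assert (Einj := wo_chain_injective wo e He).
  destruct (pairing_all (ex_intro _ e (conj (fun _ => I) Einj))) as [pr [_ Pinj]].
  assert (Prinj : Injective pr) by (intros p q; apply Pinj; exact I).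
  destruct (choice _ (fun f : omega_pow D => proj2_sig f)) as [supp Hsupp].
  pose (code := fun f : omega_pow D => map (fun d => pr (d, e f.[d])) (supp f)).
  assert (Code : forall f g, code f = code g -> forall d, f.[d] <> 0 -> g.[d] = f.[d]).
  { intros f g E d Hd.
    assert (Hin : In (pr (d, e f.[d])) (code g)).
    { rewrite <- E. apply (in_map (fun d => pr (d, e f.[d]))). apply Hsupp. exact Hd. }
    apply in_map_iff in Hin. destruct Hin as [d' [E' _]]. apply Prinj in E'.
    injection E' as -> E'. exact (Einj _ _ E'). }
  exists (fun f => encode_list pr e (code f)). intros f g E.
  apply (encode_list_injective pr e Prinj Einj) in E.
  apply opow_ext. intros d. destruct (Nat.eq_dec f.[d] 0) as [Z|Z].
  - destruct (Nat.eq_dec g.[d] 0) as [Z'|Z']; [congruence|exact (Code g f (eq_sym E) d Z')].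
  - symmetry. exact (Code f g E d Z).
Qed.

End Cardinality.

Definition sq_generator {T : Type} {P : T -> Prop} {le : T -> T -> Prop} (a : sq_car P le) : T :=
  proj1_sig (constructive_indefinite_description _
    (proj2_sig a : exists p, P p /\ forall q, proj1_sig a q <-> (P q /\ sep_le P le p q /\ sep_le P le q p))).

Lemma sq_generator_spec {T : Type} {P : T -> Prop} {le : T -> T -> Prop} (a : sq_car P le) :
  forall q, proj1_sig a q <-> (P q /\ sep_le P le (sq_generator a) q /\ sep_le P le q (sq_generator a)).
Proof. unfold sq_generator. destruct (constructive_indefinite_description _ _) as [p Hp]. exact (proj2 Hp). Qed.

Lemma sq_generator_injective {T : Type} (P : T -> Prop) (le : T -> T -> Prop) :
  Injective (@sq_generator T P le).
Proof.
  intros a b E.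
  assert (Hab : forall q, proj1_sig a q <-> proj1_sig b q) by (intros q; rewrite !sq_generator_spec, E; reflexivity).
  destruct a as [a Ha], b as [b Hb]. simpl in Hab. apply subset_eq_compat.
  apply functional_extensionality. intros q. apply propositional_extensionality. exact (Hab q).
Qed.

Definition image {T U : Type} (phi : T -> U) (A : T -> Prop) : U -> Prop := fun u => exists x, A x /\ phi x = u.

Lemma image_injective {T U : Type} (phi : T -> U) : Injective phi -> Injective (image phi).
Proof.
  intros Hphi.
  assert (Sub : forall A B, image phi A = image phi B -> forall x, A x -> B x).
  { intros A B E x Hx. assert (Hi : image phi A (phi x)) by (exists x; auto).
    rewrite E in Hi. destruct Hi as [y [Hy Ey]]. apply Hphi in Ey. subst. exact Hy. }
  intros A B E. apply functional_extensionality. intros x.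
  apply propositional_extensionality. split; apply Sub; auto.
Qed.

Theorem mainTheorem4 (D : Type) (ltD : D -> D -> Prop)
  (hwo : is_well_order ltD) (hpos : inhabited D) :
  let X := omega_pow D in
  let ltX := @opow_lt D ltD in
  let I := I_X ltX in
  is_ideal I /\
  ( (* (a) *)
    (forall A : X -> Prop, PP ltX A <-> ~ I A) /\
    (forall A B : X -> Prop, PP ltX A -> PP ltX B ->
       (sep_le (PP ltX) subset A B <-> I (setminus A B))) /\
    (exists f : sq_car (PP ltX) subset -> bq_pos I,
       (forall a b, f a = f b -> a = b) /\ (forall c, exists a, f a = c) /\
       (forall a b, sq_le (PP ltX) subset a b <-> bq_le I (f a) (f b))) ) /\
  ( (* (b) delta >= omega *)
    (exists e : nat -> D, forall n, ltD (e n) (e (S n))) ->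
    exists g : sq_car (PP ltX) subset -> (D -> Prop),
      forall a b, g a = g b -> a = b ).
Proof.
  intros X ltX I.
  split; [exact (small_is_ideal hwo)|split; [split; [|split]|]].
  - exact (copy_iff_positive hwo).
  - exact (sep_le_iff_small hwo).
  - exact (sq_iso_bq hwo).
  - intros Hchain. destruct (opow_injects_of_chain hwo Hchain) as [phi Hphi].
    exists (fun a => image phi (sq_generator a)). intros a b E.
    exact (sq_generator_injective _ _ _ _ (image_injective phi Hphi _ _ E)).
Qed.
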